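(* Let $p,q$ be positive integers with $2\le p/q<4$, and let $f,g$ be two $(p,q)$-colourings of a graph $G$ where $g$ is obtained from $f$ by recolouring a vertex set $X$ by $\alpha$, i.e. $\alpha\in\{1,\dots,p-1\}$, $g(v)\equiv f(v)+\alpha\pmod p$ for $v\in X$ and $g(v)=f(v)$ for $v\notin X$. Then either there is a sequence of $(p,q)$-colourings $f=f_0,f_1,\dots,f_\alpha=g$ in which each $f_{i+1}$ is obtained from $f_i$ by recolouring $X$ by $1$ (adding $1$ modulo $p$ to the colour of every vertex of $X$), or there is a sequence of $(p,q)$-colourings $f=f_0,f_1,\dots,f_{p-\alpha}=g$ in which each $f_{i+1}$ is obtained from $f_i$ by recolouring $X$ by $-1$ (subtracting $1$ modulo $p$ from the colour of every vertex of $X$).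
   Context: A $(p,q)$-colouring of $G$ is a map $f:V(G)\to\{0,\dots,p-1\}$ with $q\le|f(u)-f(v)|\le p-q$ for every edge $uv$. *)

From mathcomp Require Import all_boot.
Set Implicit Arguments. Unset Strict Implicit. Unset Printing Implicit Defensive.

Definition absdiff (m n : nat) : nat := (m - n) + (n - m).

Definition pq_colouring (T : finType) (e : rel T) (p q : nat) (f : T -> nat) : Prop :=
  (forall v, f v < p) /\
  (forall u v, e u v -> q <= absdiff (f u) (f v) <= p - q).

Definition recolour (T : finType) (p : nat) (X : {set T}) (a : nat) (f : T -> nat)
  : T -> nat :=
  fun v => if v \in X then (f v + a) %% p else f v.

From mathcomp Require Import all_boot zify.

Set Implicit Arguments.
Unset Strict Implicit.
Unset Printing Implicit Defensive.

(* Colours live on the cycle Z_p, and an edge uv is valid iff f u lies on the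
   arc of the p - 2q + 1 colours at cyclic distance at least q from f v; the
   forbidden gap around f v has 2q - 1 colours, and p < 4q makes p - 2q < 2q.
   Rotating all of X preserves the edges inside X. On an edge leaving X, a walk
   from one point of the arc to another leaves the arc only if it jumps the whole
   gap, i.e. has at least 2q steps. If alpha <= p - 2q the forward walk of
   length alpha is too short for that; otherwise so is the backward walk of length
   p - alpha < 2q. The choice depends only on alpha, not on the edge. *)

Definition far (p q a b : nat) : bool := q <= absdiff a b <= p - q.

Lemma far_sym p q a b : far p q a b = far p q b a.
Proof. by rewrite /far /absdiff addnC. Qed.

Lemma modn_lt_double x p : x < p + p -> x %% p = if x < p then x else x - p.
Proof.
move=> x_lt; case: ifP => [/modn_small //|x_ge].
have ->: x = (x - p) + p by lia.
by rewrite modnDr modn_small; lia.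
Qed.

Section FarShift.

Variables (p q a b : nat).
Hypotheses (a_lt : a < p) (b_lt : b < p).

Lemma far_shift2 k : k <= p -> far p q ((a + k) %% p) ((b + k) %% p) = far p q a b.
Proof.
move=> k_le; rewrite /far /absdiff !modn_lt_double; try lia.
by case: ifP => ?; case: ifP => ?; apply/andP/andP => -[? ?]; split; lia.
Qed.

Hypotheses (p_lt_4q : p < 4 * q) (far_ab : far p q a b).

Lemma far_shift_forward alpha k : alpha + 2 * q <= p -> k <= alpha ->
  far p q ((a + alpha) %% p) b -> far p q ((a + k) %% p) b.
Proof.
move: far_ab; rewrite /far /absdiff => far0 hal hk.
rewrite !modn_lt_double; try lia.
by case: ifP => ?; case: ifP => ?; lia.
Qed.

Lemma far_shift_backward alpha k : p < alpha + 2 * q -> alpha <= k -> k <= p ->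
  far p q ((a + alpha) %% p) b -> far p q ((a + k) %% p) b.
Proof.
move: far_ab; rewrite /far /absdiff => far0 hal hk1 hk2.
rewrite !modn_lt_double; try lia.
by case: ifP => ?; case: ifP => ?; lia.
Qed.

End FarShift.

Section Recolour.

Variables (T : finType) (p : nat) (X : {set T}).

Lemma recolour_eqmod a b f : a = b %[mod p] -> recolour p X a f =1 recolour p X b f.
Proof. by move=> eq_ab v; rewrite /recolour -modnDmr eq_ab modnDmr. Qed.

Lemma recolour_add a b f : recolour p X a (recolour p X b f) =1 recolour p X (b + a) f.
Proof. by move=> v; rewrite /recolour; case: ifP => vX; rewrite ?vX // modnDml addnA. Qed.

Lemma recolour_id a f : (forall v, f v < p) -> p %| a -> recolour p X a f =1 f.
Proof.
move=> f_lt /eqP a_mod0 v; rewrite /recolour; case: ifP => // _.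
by rewrite -modnDmr a_mod0 addn0 modn_small.
Qed.

Variables (e : rel T) (q : nat).
Hypothesis e_sym : symmetric e.

Lemma recolour_pq_colouring k f : k <= p -> pq_colouring e p q f ->
    (forall u v, e u v -> u \in X -> v \notin X -> far p q ((f u + k) %% p) (f v)) ->
  pq_colouring e p q (recolour p X k f).
Proof.
move=> k_le [f_lt f_far] far_out; split=> [v | u v uv].
  by rewrite /recolour; case: ifP => // _; rewrite ltn_pmod // (leq_ltn_trans _ (f_lt v)).
rewrite -/(far p q _ _) /recolour.
case: (boolP (u \in X)) => uX; case: (boolP (v \in X)) => vX.
- by rewrite far_shift2 //; exact: f_far.
- exact: far_out.
- by rewrite far_sym; apply: far_out; rewrite // e_sym.
- exact: f_far.
Qed.

End Recolour.

Section RecolourWalk.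

Variables (T : finType) (e : rel T) (p q : nat) (X : {set T}) (f g : T -> nat) (alpha : nat).
Hypotheses (f_lt : forall v, f v < p) (g_def : g =1 recolour p X alpha f).

Lemma forward_recolour_walk :
    (forall k, k <= alpha -> pq_colouring e p q (recolour p X k f)) ->
  exists s : nat -> T -> nat,
    (forall v, s 0 v = f v) /\ (forall v, s alpha v = g v) /\
    (forall i, i <= alpha -> pq_colouring e p q (s i)) /\
    (forall i, i < alpha -> forall v, s i.+1 v = recolour p X 1 (s i) v).
Proof.
move=> colouring_k; exists (fun i => recolour p X i f).
split; first exact: recolour_id.
split; first by move=> v; rewrite g_def.
by split=> // i _ v; rewrite recolour_add addn1.
Qed.

Lemma backward_recolour_walk : alpha <= p ->
    (forall k, alpha <= k <= p -> pq_colouring e p q (recolour p X k f)) ->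
  exists s : nat -> T -> nat,
    (forall v, s 0 v = f v) /\ (forall v, s (p - alpha) v = g v) /\
    (forall i, i <= p - alpha -> pq_colouring e p q (s i)) /\
    (forall i, i < p - alpha -> forall v, s i.+1 v = recolour p X (p - 1) (s i) v).
Proof.
move=> alpha_le colouring_k; exists (fun i => recolour p X (p - i) f).
split; first by move=> v; rewrite subn0 recolour_id.
split; first by move=> v; rewrite subKn // g_def.
split=> [i i_le | i i_lt v]; first by apply: colouring_k; lia.
rewrite recolour_add; apply: recolour_eqmod.
have ->: p - i + (p - 1) = p - i.+1 + p by lia.
by rewrite modnDr.
Qed.

End RecolourWalk.

Theorem proposition2p6 (T : finType) (e : rel T)
  (e_sym : symmetric e) (e_irr : irreflexive e)
  (p q : nat) (hq : 0 < q) (hp : 0 < p)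
  (hratio_lo : 2 * q <= p) (hratio_hi : p < 4 * q)
  (f g : T -> nat) (X : {set T}) (alpha : nat)
  (halpha1 : 1 <= alpha) (halpha2 : alpha <= p - 1)
  (hf : pq_colouring e p q f) (hg : pq_colouring e p q g)
  (hgf : forall v, g v = recolour p X alpha f v) :
  (exists s : nat -> T -> nat,
      (forall v, s 0 v = f v) /\ (forall v, s alpha v = g v) /\
      (forall i, i <= alpha -> pq_colouring e p q (s i)) /\
      (forall i, i < alpha -> forall v, s i.+1 v = recolour p X 1 (s i) v))
  \/
  (exists s : nat -> T -> nat,
      (forall v, s 0 v = f v) /\ (forall v, s (p - alpha) v = g v) /\
      (forall i, i <= p - alpha -> pq_colouring e p q (s i)) /\
      (forall i, i < p - alpha -> forall v, s i.+1 v = recolour p X (p - 1) (s i) v)).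
Proof.
have [f_lt f_far] := hf; have [_ g_far] := hg.
have far_recoloured u v : e u v -> u \in X -> v \notin X ->
    far p q ((f u + alpha) %% p) (f v).
  by move=> uv uX vX; have := g_far u v uv; rewrite !hgf /recolour uX (negbTE vX).
case: (leqP (alpha + 2 * q) p) => [short | long]; [left | right].
- apply: forward_recolour_walk => // k k_le.
  apply: recolour_pq_colouring => //; first lia.
  move=> u v uv uX vX.
  exact: (far_shift_forward (f_lt u) (f_lt v) hratio_hi (f_far u v uv) short k_le
            (far_recoloured u v uv uX vX)).
- apply: backward_recolour_walk => //; first lia.
  move=> k /andP[k_ge k_le]; apply: recolour_pq_colouring => //.
  move=> u v uv uX vX.
  exact: (far_shift_backward (f_lt u) (f_lt v) hratio_hi (f_far u v uv) long k_ge k_le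
            (far_recoloured u v uv uX vX)).
Qed.
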